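(* For every positive integer $n$ that is a perfect square, there exist two sets $A_1,A_2$ of $n$ lines each in $\mathbb{R}^2$ such that for every line $\ell$ there are $i\in\{1,2\}$ and a closed halfplane $\ell^\sigma$ bounded by $\ell$ such that every subset $A'\subseteq A_i$ with $V(A')\subseteq\ell^\sigma$ satisfies $|A'|\le\sqrt{n}$.
   Context: For a finite set $A$ of lines in $\mathbb{R}^2$, $V(A)$ denotes the set of all intersection points of pairs of lines of $A$. *)

From Stdlib Require Import Reals List.
Import ListNotations.
Open Scope R_scope.

(* A line in R^2, given by coefficients (a,b,c): { (x,y) | a x + b y = c },
   valid when (a,b) <> (0,0). *)
Record line := mkLine { la : R; lb : R; lc : R }.

Definition valid_line (L : line) : Prop := la L <> 0 \/ lb L <> 0.

Definition on_line (L : line) (p : R * R) : Prop :=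
  la L * fst p + lb L * snd p = lc L.

Definition same_line (L1 L2 : line) : Prop :=
  forall p, on_line L1 p <-> on_line L2 p.

Definition line_set (A : list line) : Prop :=
  (forall L, In L A -> valid_line L) /\
  NoDup A /\
  (forall L1 L2, In L1 A -> In L2 A -> L1 <> L2 -> ~ same_line L1 L2).

Definition V (A : list line) (p : R * R) : Prop :=
  exists L1 L2, In L1 A /\ In L2 A /\ ~ same_line L1 L2 /\
                on_line L1 p /\ on_line L2 p.

Definition closed_halfplane (L : line) (s : bool) (p : R * R) : Prop :=
  if s then la L * fst p + lb L * snd p >= lc L
  else la L * fst p + lb L * snd p <= lc L.

(* A1 consists of n lines through the origin.  A2 consists of k pencils of
   k lines, the j-th pencil through the point (j, 0), and all n slopes are
   distinct and positive, so that two lines of different pencils meet strictly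
   above the x-axis.  If l misses the origin, the closed halfplane of l avoiding
   the origin contains no vertex of A1, so a subfamily of A1 with vertices there
   has at most one line.  If l passes through the origin but is not the x-axis,
   one of its closed halfplanes avoids every pencil centre, so a subfamily of A2
   with vertices there has at most one line per pencil.  If l is the x-axis, its
   lower closed halfplane contains no vertex of two lines of different pencils,
   so such a subfamily lies in a single pencil. *)
From Stdlib Require Import Reals List Lia Arith Lra.
Open Scope R_scope.

Definition halfplane_bounded (l : line) (s : bool) (A : list line) (m : nat) :=
  forall A' : list line, NoDup A' -> incl A' A ->
    (forall p, V A' p -> closed_halfplane l s p) -> (length A' <= m)%nat.

Lemma halfplane_bounded_le l s A m m' :
  (m <= m')%nat -> halfplane_bounded l s A m -> halfplane_bounded l s A m'.
Proof. intros Hm HA A' ND Hi HV; specialize (HA A' ND Hi HV); lia. Qed.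

Lemma incl_map_inv {T U : Type} (g : T -> U) (A' : list U) (S : list T) :
  incl A' (map g S) -> exists I, A' = map g I /\ incl I S.
Proof.
  induction A' as [|x A' IH]; intros Hi.
  - exists nil; split; [reflexivity | intros a []].
  - destruct IH as [I [-> HI]]; [intros y Hy; apply Hi; now right|].
    assert (Hx : In x (map g S)) by (apply Hi; now left).
    apply in_map_iff in Hx; destruct Hx as [i [<- Hi']].
    exists (i :: I); split; [reflexivity|].
    intros y [<-|Hy]; auto.
Qed.

Lemma NoDup_length_le_of_injective_bounded (I : list nat) (f : nat -> nat) m :
  NoDup I -> (forall i j, In i I -> In j I -> f i = f j -> i = j) ->
  (forall i, In i I -> (f i < m)%nat) -> (length I <= m)%nat.
Proof.
  intros ND Hf Hb.
  rewrite <- (length_map f I), <- (length_seq m 0).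
  apply NoDup_incl_length.
  - now apply NoDup_map_NoDup_ForallPairs.
  - intros y Hy; apply in_map_iff in Hy; destruct Hy as [i [<- Hi]].
    apply in_seq; specialize (Hb i Hi); lia.
Qed.

Lemma halfplane_bounded_by_colouring (fam : nat -> line) (S : list nat)
    (f : nat -> nat) (m : nat) (l : line) (s : bool) :
  (forall i j, i <> j -> ~ same_line (fam i) (fam j)) ->
  (forall i, In i S -> (f i < m)%nat) ->
  (forall i j, In i S -> In j S -> i <> j -> f i = f j ->
     exists p, on_line (fam i) p /\ on_line (fam j) p /\
               ~ closed_halfplane l s p) ->
  halfplane_bounded l s (map fam S) m.
Proof.
  intros Hdist Hf Hmeet A' ND Hi HV.
  destruct (incl_map_inv _ _ _ Hi) as [I [-> HI]].
  apply NoDup_map_inv in ND; rewrite length_map.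
  apply (NoDup_length_le_of_injective_bounded I f); auto.
  intros i j Hi' Hj' E.
  destruct (Nat.eq_dec i j) as [|Hne]; [assumption | exfalso].
  destruct (Hmeet i j (HI i Hi') (HI j Hj') Hne E) as [p [Pi [Pj Hp]]].
  apply Hp, HV; exists (fam i), (fam j).
  repeat split; auto using in_map.
Qed.

Lemma not_closed_halfplane_lt (l : line) (p : R * R) :
  la l * fst p + lb l * snd p < lc l -> ~ closed_halfplane l true p.
Proof. unfold closed_halfplane; lra. Qed.

Lemma not_closed_halfplane_gt (l : line) (p : R * R) :
  lc l < la l * fst p + lb l * snd p -> ~ closed_halfplane l false p.
Proof. unfold closed_halfplane; lra. Qed.

Lemma exists_closed_halfplane_avoiding (l : line) (P : R * R -> Prop) :
  (forall p, P p -> la l * fst p + lb l * snd p < lc l) \/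
  (forall p, P p -> lc l < la l * fst p + lb l * snd p) ->
  exists s, forall p, P p -> ~ closed_halfplane l s p.
Proof.
  intros [H|H]; [exists true | exists false]; intros p Hp.
  - now apply not_closed_halfplane_lt, H.
  - now apply not_closed_halfplane_gt, H.
Qed.

Definition axis_line (q s : R) : line := mkLine s (-1) (s * q).

Lemma on_axis_line_centre (q s : R) : on_line (axis_line q s) (q, 0).
Proof. unfold on_line; simpl; ring. Qed.

Lemma same_axis_line_slope (q1 q2 s1 s2 : R) :
  same_line (axis_line q1 s1) (axis_line q2 s2) -> s1 = s2.
Proof.
  intros S.
  assert (E0 := proj1 (S (0, - (s1 * q1))) ltac:(unfold on_line; simpl; ring)).
  assert (E1 := proj1 (S (1, s1 - s1 * q1)) ltac:(unfold on_line; simpl; ring)).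
  unfold on_line in E0, E1; simpl in E0, E1; lra.
Qed.

(* The intersection point is (x, s1 (x - q1)) with x (s2 - s1) = s2 q2 - s1 q1,
   whose height is s1 s2 (q2 - q1) / (s2 - s1). *)
Lemma axis_lines_meet_above (q1 q2 s1 s2 : R) :
  0 < s1 -> s1 < s2 -> q1 < q2 ->
  exists p, on_line (axis_line q1 s1) p /\ on_line (axis_line q2 s2) p /\
            0 < snd p.
Proof.
  intros Hs1 Hs Hq.
  set (x := (s2 * q2 - s1 * q1) / (s2 - s1)).
  assert (Ex : x * (s2 - s1) = s2 * q2 - s1 * q1) by (unfold x; field; lra).
  assert (Ey : s1 * (x - q1) = s1 * s2 * (q2 - q1) / (s2 - s1))
    by (apply (Rmult_eq_reg_r (s2 - s1)); [field_simplify; nra | lra]).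
  exists (x, s1 * (x - q1)); unfold on_line; simpl.
  split; [ring | split; [nra|]].
  rewrite Ey; apply Rdiv_lt_0_compat; [|lra].
  repeat apply Rmult_lt_0_compat; lra.
Qed.

Definition axis_family (q : nat -> R) (i : nat) : line :=
  axis_line (q i) (INR i + 1).

Lemma axis_family_distinct (q : nat -> R) (i j : nat) :
  i <> j -> ~ same_line (axis_family q i) (axis_family q j).
Proof.
  intros Hij S; apply same_axis_line_slope in S.
  apply Hij, INR_eq; lra.
Qed.

Lemma line_set_axis_family (q : nat -> R) (n : nat) :
  line_set (map (axis_family q) (seq 0 n)).
Proof.
  split; [|split].
  - intros L HL; apply in_map_iff in HL; destruct HL as [i [<- _]].
    right; simpl; lra.
  - apply NoDup_map_NoDup_ForallPairs; [|apply seq_NoDup].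
    intros i j _ _ E; destruct (Nat.eq_dec i j) as [|Hne]; [assumption|].
    exfalso; apply (axis_family_distinct q i j Hne); rewrite E; easy.
  - intros L1 L2 H1 H2 Hne.
    apply in_map_iff in H1; destruct H1 as [i [<- _]].
    apply in_map_iff in H2; destruct H2 as [j [<- _]].
    apply axis_family_distinct; intros ->; now apply Hne.
Qed.

Lemma length_axis_family (q : nat -> R) (n : nat) :
  length (map (axis_family q) (seq 0 n)) = n.
Proof. now rewrite length_map, length_seq. Qed.

Lemma axis_family_meet_above (q : nat -> R) (i j : nat) :
  (forall i j, (i <= j)%nat -> q i <= q j) -> q i <> q j ->
  exists p, on_line (axis_family q i) p /\ on_line (axis_family q j) p /\
            0 < snd p.
Proof.
  intros Hmono Hq.
  assert (Hi := pos_INR i); assert (Hj := pos_INR j).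
  destruct (Nat.lt_ge_cases i j) as [Hij|Hji].
  - apply axis_lines_meet_above; [lra | apply lt_INR in Hij; lra |].
    specialize (Hmono i j ltac:(lia)); lra.
  - destruct (Nat.eq_dec i j) as [->|Hne]; [easy|].
    assert (Hlt : INR j < INR i) by (apply lt_INR; lia).
    destruct (axis_lines_meet_above (q j) (q i) (INR j + 1) (INR i + 1))
      as [p [Pj [Pi Hp]]]; [lra | lra | |].
    + specialize (Hmono j i Hji); lra.
    + now exists p.
Qed.

Definition concurrent_lines (n : nat) : list line :=
  map (axis_family (fun _ => 0)) (seq 0 n).

Definition pencil_centre (k i : nat) : R := INR (i / k) + 1.

Definition pencils (k n : nat) : list line :=
  map (axis_family (pencil_centre k)) (seq 0 n).

Lemma pencil_centre_mono (k i j : nat) :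
  (i <= j)%nat -> pencil_centre k i <= pencil_centre k j.
Proof.
  intros Hij; unfold pencil_centre.
  apply Rplus_le_compat_r, le_INR, Nat.Div0.div_le_mono, Hij.
Qed.

Lemma concurrent_lines_bounded (n : nat) (l : line) :
  lc l <> 0 -> exists s, halfplane_bounded l s (concurrent_lines n) 1.
Proof.
  intros Hc.
  destruct (exists_closed_halfplane_avoiding l (fun p => p = (0, 0)))
    as [s Hs].
  { destruct (Rlt_dec 0 (lc l)); [left | right]; intros p ->; simpl; lra. }
  exists s; apply (halfplane_bounded_by_colouring _ _ (fun _ => 0%nat)).
  - apply axis_family_distinct.
  - intros; lia.
  - intros i j _ _ _ _; exists (0, 0); split; [|split].
    1, 2: apply on_axis_line_centre.
    now apply Hs.
Qed.

Lemma pencils_bounded_off_axis (k : nat) (l : line) :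
  lc l = 0 -> la l <> 0 ->
  exists s, halfplane_bounded l s (pencils k (k * k)) k.
Proof.
  intros Hc Ha.
  destruct (exists_closed_halfplane_avoiding l
              (fun p => exists i, p = (pencil_centre k i, 0))) as [s Hs].
  { assert (Hq : forall i, 1 <= pencil_centre k i)
      by (intros i; unfold pencil_centre; pose proof (pos_INR (i / k)); lra).
    destruct (Rlt_dec 0 (la l)); [right | left]; intros p [i ->]; simpl;
      specialize (Hq i); rewrite Hc; nra. }
  exists s; apply (halfplane_bounded_by_colouring _ _ (fun i => i / k)%nat).
  - apply axis_family_distinct.
  - intros i Hi; apply in_seq in Hi.
    apply Nat.Div0.div_lt_upper_bound; lia.
  - intros i j _ _ _ E; exists (pencil_centre k i, 0); split; [|split].
    + apply on_axis_line_centre.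
    + replace (pencil_centre k i) with (pencil_centre k j)
        by (unfold pencil_centre; now rewrite E).
      apply on_axis_line_centre.
    + apply Hs; now exists i.
Qed.

Lemma pencils_bounded_on_axis (k : nat) (l : line) :
  (k <> 0)%nat -> lc l = 0 -> la l = 0 -> lb l <> 0 ->
  exists s, halfplane_bounded l s (pencils k (k * k)) k.
Proof.
  intros Hk Hc Ha Hb.
  destruct (exists_closed_halfplane_avoiding l (fun p => 0 < snd p)) as [s Hs].
  { destruct (Rlt_dec 0 (lb l)); [right | left]; intros p Hp;
      rewrite Ha, Hc; nra. }
  exists s; apply (halfplane_bounded_by_colouring _ _ (fun i => i mod k)%nat).
  - apply axis_family_distinct.
  - intros i _; now apply Nat.mod_upper_bound.
  - intros i j _ _ Hij E.
    assert (Hq : pencil_centre k i <> pencil_centre k j).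
    { unfold pencil_centre; intros Q.
      apply Hij; rewrite (Nat.div_mod_eq i k), (Nat.div_mod_eq j k), E.
      do 2 f_equal; apply INR_eq; lra. }
    destruct (axis_family_meet_above _ i j (pencil_centre_mono k) Hq)
      as [p [Pi [Pj Hp]]].
    exists p; auto.
Qed.

Theorem mainTheorem4 :
  forall (n k : nat), (0 < n)%nat -> n = (k * k)%nat ->
  exists A1 A2 : list line,
    line_set A1 /\ length A1 = n /\
    line_set A2 /\ length A2 = n /\
    forall l : line, valid_line l ->
      exists (A : list line) (s : bool),
        (A = A1 \/ A = A2) /\
        forall A' : list line,
          NoDup A' -> incl A' A ->
          (forall p, V A' p -> closed_halfplane l s p) ->
          (length A' <= k)%nat.
Proof.
  intros n k Hn ->.
  assert (Hk : k <> 0%nat) by (intros ->; simpl in Hn; lia).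
  exists (concurrent_lines (k * k)), (pencils k (k * k)).
  repeat split; try apply line_set_axis_family; try apply length_axis_family.
  intros l Hl.
  destruct (Req_dec (lc l) 0) as [Hc|Hc].
  - destruct (Req_dec (la l) 0) as [Ha|Ha].
    + assert (Hb : lb l <> 0) by (destruct Hl; [contradiction | assumption]).
      destruct (pencils_bounded_on_axis k l Hk Hc Ha Hb) as [s Hs].
      exists (pencils k (k * k)), s; auto.
    + destruct (pencils_bounded_off_axis k l Hc Ha) as [s Hs].
      exists (pencils k (k * k)), s; auto.
  - destruct (concurrent_lines_bounded (k * k) l Hc) as [s Hs].
    exists (concurrent_lines (k * k)), s; split; [now left|].
    apply (halfplane_bounded_le l s _ 1); [lia | exact Hs].
Qed.
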